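(* For terms $M_1,M_2$ of the CCV $\lambda\mu$-calculus, if $[\![M_1]\!]=[\![M_2]\!]$ up to $\beta\eta$-equality in the target calculus, then $M_1=_{ccv}M_2$.
   Context: CCV $\lambda\mu$-calculus. Ordinary variables $x,y,z,\dots$ and continuation variables $k,l,\dots$ are disjoint. Terms $M ::= x \mid \lambda x.M \mid MM \mid (M\ \mathsf{where}\ x:=M) \mid \mu k.J$, jumps $J ::= [k]M \mid (J\ \mathsf{where}\ x:=M)$, where $(L\ \mathsf{where}\ x:=M)$ means $\mathsf{let}\ x=M\ \mathsf{in}\ L$ ($x$ bound in $L$ only). Terms are identified up to $\alpha$-conversion and the congruence generated by (E1) $(L\ \mathsf{where}\ x:=(M\ \mathsf{where}\ y:=N))=((L\ \mathsf{where}\ x:=M)\ \mathsf{where}\ y:=N)$ if $y$ not free in $L$; (E2) $((\mu k.J)\ \mathsf{where}\ x:=M)=\mu k.(J\ \mathsf{where}\ x:=M)$ if $k$ not free in $M$; (E3) $[k](L\ \mathsf{where}\ x:=M)=([k]L\ \mathsf{where}\ x:=M)$. Values $V$: variables and $\lambda$-abstractions; $N$ a non-value. $=_{ccv}$ is the smallest congruence containing ($z$ fresh): $NM\to(zM\ \mathsf{where}\ z:=N)$; $VN\to(Vz\ \mathsf{where}\ z:=N)$; $(\lambda x.M)V\to(M\ \mathsf{where}\ x:=V)$; $(M\ \mathsf{where}\ x:=V)\to M\{V/x\}$; $(M\ \mathsf{where}\ x:=\mu k.J)\to\mu k.J\{[k]\square\mapsto[k](M\ \mathsf{where}\ x:=\square)\}$;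 $[l]\mu k.J\to J\{l/k\}$; $\lambda x.Vx\to V$ ($x$ not free in $V$); $(x\ \mathsf{where}\ x:=M)\to M$; $\mu k.[k]M\to M$ ($k$ not free in $M$); the context substitution replaces recursively each subjump $[k]Q$ with $k$ free by $[k](M\ \mathsf{where}\ x:=Q)$, and $J\{l/k\}$ replaces each such $[k]Q$ by $[l]Q$. Target calculus: sorted $\lambda$-calculus $T::=\lambda k.Q\mid WW$, $Q::=KW\mid TK$, $W::=x\mid\lambda x.T$, $K::=k\mid\lambda x.Q$ with $\beta\eta$. CPS translation (fresh bound variables): $\langle V\rangle[K]=KV^*$; $\langle V_1V_2\rangle[K]=V_1^*V_2^*K$; $\langle VN\rangle[K]=\langle N\rangle[\lambda y.V^*yK]$; $\langle NV\rangle[K]=\langle N\rangle[\lambda x.xV^*K]$; $\langle N_1N_2\rangle[K]=\langle N_1\rangle[\lambda x.\langle N_2\rangle[\lambda y.xyK]]$; $\langle (L\ \mathsf{where}\ x:=M)\rangle[K]=\langle M\rangle[\lambda x.\langle L\rangle[K]]$ (renaming $x$ if free in $K$); $\langle\mu k.J\rangle[K]=(\lambda k.\langle J\rangle)K$; $\langle[k]M\rangle=\langle M\rangle[k]$; $\langle (J\ \mathsf{where}\ x:=M)\rangle=\langle M\rangle[\lambda x.\langle J\rangle]$; $x^*=x$; $(\lambda x.M)^*=\lambda xk.\langle M\rangle[k]$; $[\![M]\!]=\lambda k.\langle M\rangle[k]$, computed from any syntax-tree representative. *)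

(* CCV lambda-mu calculus with de Bruijn indices (two separate
   index spaces: ordinary variables and continuation variables), its CPS
   translation into the (untyped) lambda-calculus, and beta-eta equality. *)
From Stdlib Require Import Arith.

Definition scons {A : Type} (a : A) (f : nat -> A) (n : nat) : A :=
  match n with 0 => a | S m => f m end.

Definition uprn (xi : nat -> nat) : nat -> nat := scons 0 (fun m => S (xi m)).

(* Var n : ordinary variable (de Bruijn index among ordinary binders)
   Lam M : lambda x. M   (binds ordinary index 0 in M)
   Where L M : (L where x := M)  (x bound in L only, index 0)
   Mu J : mu k. J  (binds continuation index 0 in J)
   Jmp k M : [k] M
   JWhere J M : (J where x := M) *)
Inductive term : Type :=
| Var : nat -> term
| Lam : term -> term
| App : term -> term -> term
| Where : term -> term -> term
| Mu : jump -> term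
with jump : Type :=
| Jmp : nat -> term -> jump
| JWhere : jump -> term -> jump.

Definition is_value (M : term) : bool :=
  match M with Var _ | Lam _ => true | _ => false end.

Fixpoint ren_o (xi : nat -> nat) (M : term) : term :=
  match M with
  | Var n => Var (xi n)
  | Lam B => Lam (ren_o (uprn xi) B)
  | App A B => App (ren_o xi A) (ren_o xi B)
  | Where L N => Where (ren_o (uprn xi) L) (ren_o xi N)
  | Mu J => Mu (ren_oj xi J)
  end
with ren_oj (xi : nat -> nat) (J : jump) : jump :=
  match J with
  | Jmp k N => Jmp k (ren_o xi N)
  | JWhere J' N => JWhere (ren_oj (uprn xi) J') (ren_o xi N)
  end.

Fixpoint ren_k (xi : nat -> nat) (M : term) : term :=
  match M with
  | Var n => Var n
  | Lam B => Lam (ren_k xi B)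
  | App A B => App (ren_k xi A) (ren_k xi B)
  | Where L N => Where (ren_k xi L) (ren_k xi N)
  | Mu J => Mu (ren_kj (uprn xi) J)
  end
with ren_kj (xi : nat -> nat) (J : jump) : jump :=
  match J with
  | Jmp k N => Jmp (xi k) (ren_k xi N)
  | JWhere J' N => JWhere (ren_kj xi J') (ren_k xi N)
  end.

Definition up_o (sigma : nat -> term) : nat -> term :=
  scons (Var 0) (fun n => ren_o S (sigma n)).

Fixpoint sub_o (sigma : nat -> term) (M : term) : term :=
  match M with
  | Var n => sigma n
  | Lam B => Lam (sub_o (up_o sigma) B)
  | App A B => App (sub_o sigma A) (sub_o sigma B)
  | Where L N => Where (sub_o (up_o sigma) L) (sub_o sigma N)
  | Mu J => Mu (sub_oj (fun n => ren_k S (sigma n)) J)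
  end
with sub_oj (sigma : nat -> term) (J : jump) : jump :=
  match J with
  | Jmp k N => Jmp k (sub_o sigma N)
  | JWhere J' N => JWhere (sub_oj (up_o sigma) J') (sub_o sigma N)
  end.

(* context substitution J{[k]□ ↦ [k](M where x := □)}: here k is the current
   de Bruijn index of the continuation variable, and M has the ordinary
   variable x free as index 0. Applied recursively inside Q. *)
Fixpoint csub (k : nat) (M : term) (t : term) : term :=
  match t with
  | Var n => Var n
  | Lam B => Lam (csub k (ren_o (uprn S) M) B)
  | App A B => App (csub k M A) (csub k M B)
  | Where L N => Where (csub k (ren_o (uprn S) M) L) (csub k M N)
  | Mu J => Mu (csubj (S k) (ren_k S M) J)
  end
with csubj (k : nat) (M : term) (J : jump) : jump :=
  match J with
  | Jmp l Q =>
      if Nat.eqb l k then Jmp l (Where M (csub k M Q)) else Jmp l (csub k M Q)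
  | JWhere J' N => JWhere (csubj k (ren_o (uprn S) M) J') (csub k M N)
  end.

(* =_ccv : smallest congruence containing the structural equations (E1)-(E3)
   (terms are identified up to these) and the CCV rules. *)
Inductive ccv_eq : term -> term -> Prop :=
| ccv_refl M : ccv_eq M M
| ccv_sym M N : ccv_eq M N -> ccv_eq N M
| ccv_trans M N P : ccv_eq M N -> ccv_eq N P -> ccv_eq M P
| ccv_Lam M M' : ccv_eq M M' -> ccv_eq (Lam M) (Lam M')
| ccv_App M M' N N' : ccv_eq M M' -> ccv_eq N N' -> ccv_eq (App M N) (App M' N')
| ccv_Where L L' M M' : ccv_eq L L' -> ccv_eq M M' -> ccv_eq (Where L M) (Where L' M')
| ccv_Mu J J' : ccvj_eq J J' -> ccv_eq (Mu J) (Mu J')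
| ccv_E1 L M N :
    ccv_eq (Where L (Where M N)) (Where (Where (ren_o (uprn S) L) M) N)
| ccv_E2 J M : ccv_eq (Where (Mu J) M) (Mu (JWhere J (ren_k S M)))
(* NM -> (zM where z := N) *)
| ccv_appL N M : is_value N = false ->
    ccv_eq (App N M) (Where (App (Var 0) (ren_o S M)) N)
(* VN -> (Vz where z := N) *)
| ccv_appR V N : is_value V = true -> is_value N = false ->
    ccv_eq (App V N) (Where (App (ren_o S V) (Var 0)) N)
(* (lambda x. M) V -> (M where x := V) *)
| ccv_beta M V : is_value V = true -> ccv_eq (App (Lam M) V) (Where M V)
(* (M where x := V) -> M{V/x} *)
| ccv_let M V : is_value V = true -> ccv_eq (Where M V) (sub_o (scons V Var) M)
(* (M where x := mu k. J) -> mu k. J{[k]□ ↦ [k](M where x := □)} *)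
| ccv_letmu M J : ccv_eq (Where M (Mu J)) (Mu (csubj 0 (ren_k S M) J))
(* lambda x. V x -> V *)
| ccv_eta V : is_value V = true -> ccv_eq (Lam (App (ren_o S V) (Var 0))) V
(* (x where x := M) -> M *)
| ccv_letid M : ccv_eq (Where (Var 0) M) M
(* mu k. [k] M -> M *)
| ccv_mueta M : ccv_eq (Mu (Jmp 0 (ren_k S M))) M
with ccvj_eq : jump -> jump -> Prop :=
| ccvj_refl J : ccvj_eq J J
| ccvj_sym J J' : ccvj_eq J J' -> ccvj_eq J' J
| ccvj_trans J1 J2 J3 : ccvj_eq J1 J2 -> ccvj_eq J2 J3 -> ccvj_eq J1 J3
| ccvj_Jmp k M M' : ccv_eq M M' -> ccvj_eq (Jmp k M) (Jmp k M')
| ccvj_JWhere J J' M M' : ccvj_eq J J' -> ccv_eq M M' ->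
    ccvj_eq (JWhere J M) (JWhere J' M')
| ccvj_E1 J M N :
    ccvj_eq (JWhere J (Where M N)) (JWhere (JWhere (ren_oj (uprn S) J) M) N)
| ccvj_E3 k L M : ccvj_eq (Jmp k (Where L M)) (JWhere (Jmp k L) M)
(* [l] mu k. J -> J{l/k} *)
| ccvj_mu l J : ccvj_eq (Jmp l (Mu J)) (ren_kj (scons l (fun n => n)) J).

Inductive tm : Type :=
| tvar : nat -> tm
| tlam : tm -> tm
| tapp : tm -> tm -> tm.

Fixpoint tren (xi : nat -> nat) (t : tm) : tm :=
  match t with
  | tvar n => tvar (xi n)
  | tlam b => tlam (tren (uprn xi) b)
  | tapp a b => tapp (tren xi a) (tren xi b)
  end.

Definition tup (sigma : nat -> tm) : nat -> tm :=
  scons (tvar 0) (fun n => tren S (sigma n)).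

Fixpoint tsub (sigma : nat -> tm) (t : tm) : tm :=
  match t with
  | tvar n => sigma n
  | tlam b => tlam (tsub (tup sigma) b)
  | tapp a b => tapp (tsub sigma a) (tsub sigma b)
  end.

Inductive beta_eta : tm -> tm -> Prop :=
| be_refl t : beta_eta t t
| be_sym t u : beta_eta t u -> beta_eta u t
| be_trans t u v : beta_eta t u -> beta_eta u v -> beta_eta t v
| be_lam t u : beta_eta t u -> beta_eta (tlam t) (tlam u)
| be_app t t' u u' : beta_eta t t' -> beta_eta u u' -> beta_eta (tapp t u) (tapp t' u')
| be_beta b a : beta_eta (tapp (tlam b) a) (tsub (scons a tvar) b)
| be_eta t : beta_eta (tlam (tapp (tren S t) (tvar 0))) t.

Definition sh (e : nat -> tm) : nat -> tm := fun n => tren S (e n).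

(* tr eo ek M K = <M>[K]; eo / ek give the target variables for the free
   ordinary / continuation variables of M; star eo ek V = Some V* for a value
   V, None for a non-value; trj eo ek J = <J>. *)
Fixpoint tr (eo ek : nat -> tm) (M : term) (K : tm) {struct M} : tm :=
  match M with
  | Var n => tapp K (eo n)
  | Lam B => tapp K (tlam (tlam (tr (sh (scons (tvar 0) (sh eo))) (sh (sh ek)) B (tvar 0))))
  | App M1 M2 =>
      match star eo ek M1, star eo ek M2 with
      | Some v1, Some v2 => tapp (tapp v1 v2) K
      | Some v1, None =>
          tr eo ek M2 (tlam (tapp (tapp (tren S v1) (tvar 0)) (tren S K)))
      | None, Some v2 =>
          tr eo ek M1 (tlam (tapp (tapp (tvar 0) (tren S v2)) (tren S K)))
      | None, None =>
          tr eo ek M1 (tlam (tr (sh eo) (sh ek) M2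
                (tlam (tapp (tapp (tvar 1) (tvar 0)) (tren S (tren S K))))))
      end
  | Where L N => tr eo ek N (tlam (tr (scons (tvar 0) (sh eo)) (sh ek) L (tren S K)))
  | Mu J => tapp (tlam (trj (sh eo) (scons (tvar 0) (sh ek)) J)) K
  end
with star (eo ek : nat -> tm) (V : term) {struct V} : option tm :=
  match V with
  | Var n => Some (eo n)
  | Lam B => Some (tlam (tlam (tr (sh (scons (tvar 0) (sh eo))) (sh (sh ek)) B (tvar 0))))
  | _ => None
  end
with trj (eo ek : nat -> tm) (J : jump) {struct J} : tm :=
  match J with
  | Jmp k N => tr eo ek N (ek k)
  | JWhere J' N => tr eo ek N (tlam (trj (scons (tvar 0) (sh eo)) (sh ek) J'))
  end.

(* [[M]] = lambda k. <M>[k]; free ordinary variable i of M is the target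
   variable 2i, free continuation variable j is the target variable 2j+1. *)
Definition cps (M : term) : tm :=
  tlam (tr (sh (fun n => tvar (2 * n))) (sh (fun n => tvar (2 * n + 1))) M (tvar 0)).

(* The CPS image lies in a sorted fragment of the target (values W, computations T, answers Q,
   continuations K) that is closed under beta and eta reduction and can be translated back into
   the source calculus.  This inverse translation maps every beta or eta step between sorted
   terms to a =ccv equation, and maps [[M]] back to a term =ccv M.  Beta-eta is Church-Rosser
   (complete developments for beta, local confluence for eta, and commutation of the two), so
   [[M1]] =beta-eta [[M2]] yields a common reduct w and
   M1 =ccv inv [[M1]] =ccv inv w =ccv inv [[M2]] =ccv M2. *)

From Stdlib Require Import Arith Lia Bool FunctionalExtensionality.
From Stdlib Require Import Relation_Definitions Relation_Operators.

Local Notation "R ^*" := (clos_refl_trans_1n _ R) (at level 1, format "R ^*").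

Section AbstractRewriting.

Variable A : Type.
Implicit Types R S P : relation A.

Definition diamond R : Prop :=
  forall t u v, R t u -> R t v -> exists w, R u w /\ R v w.

Definition commute R S : Prop :=
  forall t u v, R t u -> S t v -> exists w, S u w /\ R v w.

Lemma rt1n_one R t u : R t u -> R^* t u.
Proof. intros; eapply rt1n_trans; [eassumption | apply rt1n_refl]. Qed.

Lemma rt1n_concat R t u v : R^* t u -> R^* u v -> R^* t v.
Proof.
  induction 1; intros; auto.
  eapply rt1n_trans; eauto.
Qed.

Lemma rt1n_incl R S :
  (forall t u, R t u -> S^* t u) -> forall t u, R^* t u -> S^* t u.
Proof.
  induction 2; [apply rt1n_refl | eapply rt1n_concat; eauto].
Qed.

Lemma diamond_strip R t u v :
  diamond R -> R^* t u -> R t v -> exists w, R u w /\ R^* v w.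
Proof.
  intros D H; revert v; induction H as [t|t t' u Htt' _ IH]; intros v Htv.
  - exists v; split; [assumption | apply rt1n_refl].
  - destruct (D _ _ _ Htt' Htv) as [w1 [Ht'w1 Hvw1]].
    destruct (IH _ Ht'w1) as [w [Huw Hw1w]].
    exists w; split; [assumption | eapply rt1n_trans; eauto].
Qed.

Lemma diamond_rt1n R : diamond R -> diamond R^*.
Proof.
  intros D t u v H; revert v; induction H as [t|t t' u Htt' _ IH]; intros v Htv.
  - exists v; split; [assumption | apply rt1n_refl].
  - destruct (diamond_strip R _ _ _ D Htv Htt') as [w1 [Hvw1 Ht'w1]].
    destruct (IH _ Ht'w1) as [w [Huw Hw1w]].
    exists w; split; [assumption | eapply rt1n_trans; eauto].
Qed.

Lemma diamond_between R P :
  diamond P -> (forall t u, R t u -> P t u) -> (forall t u, P t u -> R^* t u) ->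
  diamond R^*.
Proof.
  intros D HRP HPR t u v Htu Htv.
  assert (HP : forall x y, R^* x y -> P^* x y)
    by (apply rt1n_incl; intros; apply rt1n_one, HRP; assumption).
  destruct (diamond_rt1n P D _ _ _ (HP _ _ Htu) (HP _ _ Htv)) as [w [Huw Hvw]].
  exists w; split; eapply rt1n_incl; eauto.
Qed.

Lemma diamond_refl_rt1n R : diamond (clos_refl A R) -> diamond R^*.
Proof.
  intros D; apply (diamond_between R (clos_refl A R) D).
  - intros; apply r_step; assumption.
  - intros t u []; [apply rt1n_one; assumption | apply rt1n_refl].
Qed.

Lemma commute_rt1n R S :
  (forall t u v, R t u -> S t v -> exists w, S^* u w /\ clos_refl A R v w) ->
  commute R^* S^*.
Proof.
  intros C.
  assert (strip : forall t u v, S^* t v -> R t u -> exists w, S^* u w /\ clos_refl A R v w).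
  { intros t u v H; revert u; induction H as [t|t t' v Htt' Ht'v IH]; intros u Htu.
    - exists u; split; [apply rt1n_refl | apply r_step; assumption].
    - destruct (C _ _ _ Htu Htt') as [w1 [Huw1 Ht'w1]].
      destruct Ht'w1 as [w1 Ht'w1|].
      + destruct (IH _ Ht'w1) as [w [Hw1w Hvw]].
        exists w; split; [eapply rt1n_concat|]; eauto.
      + exists v; split; [eapply rt1n_concat | apply r_refl]; eauto. }
  intros t u v H; revert v; induction H as [t|t t' u Htt' _ IH]; intros v Htv.
  - exists v; split; [assumption | apply rt1n_refl].
  - destruct (strip _ _ _ Htv Htt') as [w1 [Ht'w1 Hvw1]].
    destruct (IH _ Ht'w1) as [w [Huw Hw1w]].
    exists w; split; [assumption|].
    destruct Hvw1 as [w1 Hvw1|]; [eapply rt1n_trans|]; eauto.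
Qed.

Lemma union_confluent R S :
  diamond R^* -> diamond S^* -> commute R^* S^* -> diamond (union A R S)^*.
Proof.
  intros DR DS C.
  set (RS := fun t v => exists u, R^* t u /\ S^* u v).
  apply (diamond_between _ RS).
  - intros t u v [m1 [Htm1 Hm1u]] [m2 [Htm2 Hm2v]].
    destruct (DR _ _ _ Htm1 Htm2) as [m [Hm1m Hm2m]].
    destruct (C _ _ _ Hm1m Hm1u) as [w1 [Hmw1 Huw1]].
    destruct (C _ _ _ Hm2m Hm2v) as [w2 [Hmw2 Hvw2]].
    destruct (DS _ _ _ Hmw1 Hmw2) as [w [Hw1w Hw2w]].
    exists w; split; [exists w1 | exists w2]; split; assumption.
  - intros t u [H|H]; [exists u | exists t]; split; auto using rt1n_one, rt1n_refl.
  - intros t v [u [Htu Huv]]; eapply rt1n_concat;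
      (eapply rt1n_incl; [|eassumption]); intros; apply rt1n_one; [left|right]; assumption.
Qed.

End AbstractRewriting.

Arguments diamond {A}.
Arguments commute {A}.

Ltac funext_cases := apply functional_extensionality; intros [|?]; reflexivity.

Lemma uprn_comp xi zeta :
  (fun n => uprn xi (uprn zeta n)) = uprn (fun n => xi (zeta n)).
Proof. funext_cases. Qed.

Lemma uprn_id : uprn (fun n => n) = (fun n => n).
Proof. funext_cases. Qed.

Lemma tren_tren t : forall xi zeta,
  tren xi (tren zeta t) = tren (fun n => xi (zeta n)) t.
Proof. induction t; intros; simpl; f_equal; rewrite ?IHt, ?uprn_comp; auto. Qed.

Lemma tren_id t : tren (fun n => n) t = t.
Proof. induction t; simpl; f_equal; rewrite ?uprn_id; auto. Qed.

Lemma tren_tsub_tvar t : forall xi, tren xi t = tsub (fun n => tvar (xi n)) t.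
Proof.
  induction t; intros; simpl; f_equal; auto.
  rewrite IHt; f_equal; funext_cases.
Qed.

Lemma tsub_tren t : forall sigma xi,
  tsub sigma (tren xi t) = tsub (fun n => sigma (xi n)) t.
Proof.
  induction t; intros; simpl; f_equal; auto.
  rewrite IHt; f_equal; funext_cases.
Qed.

Lemma tren_tsub t : forall sigma xi,
  tren xi (tsub sigma t) = tsub (fun n => tren xi (sigma n)) t.
Proof.
  induction t; intros; simpl; f_equal; auto.
  rewrite IHt; f_equal; apply functional_extensionality; intros [|n]; simpl; auto.
  rewrite !tren_tren; reflexivity.
Qed.

Lemma tsub_tsub t : forall sigma tau,
  tsub sigma (tsub tau t) = tsub (fun n => tsub sigma (tau n)) t.
Proof.
  induction t; intros; simpl; f_equal; auto.
  rewrite IHt; f_equal; apply functional_extensionality; intros [|n]; simpl; auto.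
  rewrite tsub_tren, tren_tsub; reflexivity.
Qed.

Lemma tsub_id t : tsub tvar t = t.
Proof.
  induction t; simpl; f_equal; auto.
  replace (tup tvar) with tvar by funext_cases; assumption.
Qed.

Lemma tsub_beta sigma a b :
  tsub sigma (tsub (scons a tvar) b) = tsub (scons (tsub sigma a) tvar) (tsub (tup sigma) b).
Proof.
  rewrite !tsub_tsub; f_equal; apply functional_extensionality; intros [|n]; simpl; auto.
  rewrite tsub_tren, tsub_id; reflexivity.
Qed.

Lemma tren_beta xi a b :
  tren xi (tsub (scons a tvar) b) = tsub (scons (tren xi a) tvar) (tren (uprn xi) b).
Proof.
  rewrite !tren_tsub_tvar, tsub_beta; do 2 f_equal; funext_cases.
Qed.

Lemma tren_S_inj t u : tren S t = tren S u -> t = u.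
Proof.
  intros H; apply (f_equal (tren pred)) in H.
  rewrite !tren_tren, !tren_id in H; assumption.
Qed.

Fixpoint occurs (n : nat) (t : tm) : bool :=
  match t with
  | tvar m => Nat.eqb m n
  | tlam b => occurs (S n) b
  | tapp a b => occurs n a || occurs n b
  end.

Lemma tren_ext_occurs t : forall xi zeta,
  (forall n, occurs n t = true -> xi n = zeta n) -> tren xi t = tren zeta t.
Proof.
  induction t; intros xi zeta H; simpl in *.
  - f_equal; apply H, Nat.eqb_refl.
  - f_equal; apply IHt; intros [|m] Hm; simpl; auto.
  - f_equal; [apply IHt1 | apply IHt2]; intros m Hm; apply H; rewrite Hm;
      auto using orb_true_r.
Qed.

Lemma occurs_tren t : forall xi m, occurs m t = true -> occurs (xi m) (tren xi t) = true.
Proof.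
  induction t; intros xi m H; simpl in *.
  - apply Nat.eqb_eq in H; subst; apply Nat.eqb_refl.
  - exact (IHt (uprn xi) (S m) H).
  - apply orb_true_iff in H as [H|H]; [rewrite IHt1 | rewrite IHt2];
      auto using orb_true_r.
Qed.

Lemma occurs_tren_inv t : forall xi n,
  occurs n (tren xi t) = true -> exists m, occurs m t = true /\ xi m = n.
Proof.
  induction t; intros xi m H; simpl in *.
  - apply Nat.eqb_eq in H; subst; exists n; split; auto using Nat.eqb_refl.
  - destruct (IHt _ _ H) as [[|k] [Hk E]]; simpl in E; try discriminate.
    injection E as <-; exists k; auto.
  - apply orb_true_iff in H as [H|H];
      [destruct (IHt1 _ _ H) as [k [Hk E]] | destruct (IHt2 _ _ H) as [k [Hk E]]];
      exists k; rewrite Hk; auto using orb_true_r.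
Qed.

Lemma occurs0_tren_S t : occurs 0 (tren S t) = false.
Proof.
  destruct (occurs 0 (tren S t)) eqn:E; auto.
  destruct (occurs_tren_inv _ _ _ E) as [m [_ Hm]]; discriminate.
Qed.

Lemma tren_S_pred s : occurs 0 s = false -> s = tren S (tren pred s).
Proof.
  intros H; rewrite tren_tren, <- (tren_id s) at 1.
  apply tren_ext_occurs; intros [|n] Hn; simpl; congruence.
Qed.

Lemma tren_uprn_eq_tren_S xi s t :
  tren (uprn xi) s = tren S t -> exists s0, s = tren S s0 /\ t = tren xi s0.
Proof.
  intros H.
  assert (Hs : occurs 0 s = false).
  { destruct (occurs 0 s) eqn:E; auto.
    apply (occurs_tren _ (uprn xi)) in E; simpl in E.
    rewrite H, occurs0_tren_S in E; discriminate. }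
  exists (tren pred s); split; [apply tren_S_pred; assumption|].
  apply tren_S_inj; rewrite <- H, (tren_S_pred s Hs) at 1.
  rewrite !tren_tren; reflexivity.
Qed.

Lemma rt1n_map {A B : Type} (R : relation A) (R' : relation B) (f : A -> B) :
  (forall t u, R t u -> R' (f t) (f u)) -> forall t u, R^* t u -> R'^* (f t) (f u).
Proof.
  intros Hf; induction 1; [apply rt1n_refl | eapply rt1n_trans; eauto].
Qed.

Inductive beta_step : relation tm :=
| beta_contr b a : beta_step (tapp (tlam b) a) (tsub (scons a tvar) b)
| beta_lam b b' : beta_step b b' -> beta_step (tlam b) (tlam b')
| beta_appl a a' c : beta_step a a' -> beta_step (tapp a c) (tapp a' c)
| beta_appr a c c' : beta_step c c' -> beta_step (tapp a c) (tapp a c').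

Inductive eta_step : relation tm :=
| eta_contr t : eta_step (tlam (tapp (tren S t) (tvar 0))) t
| eta_lam b b' : eta_step b b' -> eta_step (tlam b) (tlam b')
| eta_appl a a' c : eta_step a a' -> eta_step (tapp a c) (tapp a' c)
| eta_appr a c c' : eta_step c c' -> eta_step (tapp a c) (tapp a c').

Definition be_step : relation tm := union tm beta_step eta_step.

Inductive par_beta : relation tm :=
| pb_var n : par_beta (tvar n) (tvar n)
| pb_lam b b' : par_beta b b' -> par_beta (tlam b) (tlam b')
| pb_app a a' c c' : par_beta a a' -> par_beta c c' -> par_beta (tapp a c) (tapp a' c')
| pb_contr b b' a a' :
    par_beta b b' -> par_beta a a' -> par_beta (tapp (tlam b) a) (tsub (scons a' tvar) b').

Fixpoint beta_develop (t : tm) : tm :=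
  match t with
  | tvar n => tvar n
  | tlam b => tlam (beta_develop b)
  | tapp (tlam b) c => tsub (scons (beta_develop c) tvar) (beta_develop b)
  | tapp a c => tapp (beta_develop a) (beta_develop c)
  end.

Lemma par_beta_refl t : par_beta t t.
Proof. induction t; constructor; auto. Qed.

Lemma par_beta_tren t t' : par_beta t t' -> forall xi, par_beta (tren xi t) (tren xi t').
Proof.
  induction 1; intros; simpl; try (constructor; auto).
  rewrite tren_beta; constructor; auto.
Qed.

Lemma par_beta_tsub t t' : par_beta t t' -> forall sigma sigma',
  (forall n, par_beta (sigma n) (sigma' n)) -> par_beta (tsub sigma t) (tsub sigma' t').
Proof.
  assert (up : forall sigma sigma', (forall n, par_beta (sigma n) (sigma' n)) ->
                 forall n, par_beta (tup sigma n) (tup sigma' n))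
    by (intros ? ? H [|n]; [constructor | apply par_beta_tren, H]).
  induction 1; intros; simpl; auto; [constructor; auto .. |].
  rewrite tsub_beta; constructor; auto.
Qed.

Lemma par_beta_develop t u : par_beta t u -> par_beta u (beta_develop t).
Proof.
  induction 1; simpl.
  - constructor.
  - constructor; assumption.
  - destruct a; try (constructor; assumption).
    inversion H; subst; inversion IHpar_beta1; subst; constructor; assumption.
  - apply par_beta_tsub; [assumption|]; intros [|n]; [assumption | constructor].
Qed.

Lemma par_beta_diamond : diamond par_beta.
Proof. intros t u v Hu Hv; exists (beta_develop t); split; apply par_beta_develop; assumption. Qed.

Lemma rt1n_tapp (R : relation tm) :
  (forall a a' c, R a a' -> R (tapp a c) (tapp a' c)) ->
  (forall a c c', R c c' -> R (tapp a c) (tapp a c')) ->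
  forall a a' c c', R^* a a' -> R^* c c' -> R^* (tapp a c) (tapp a' c').
Proof.
  intros Hl Hr a a' c c' Ha Hc; eapply rt1n_concat.
  - apply (rt1n_map R R (fun x => tapp x c)); eauto.
  - apply (rt1n_map R R (tapp a')); eauto.
Qed.

Lemma par_beta_rt1n t u : par_beta t u -> beta_step^* t u.
Proof.
  induction 1.
  - apply rt1n_refl.
  - apply (rt1n_map _ _ tlam beta_lam); assumption.
  - apply rt1n_tapp; auto using beta_appl, beta_appr.
  - eapply rt1n_concat.
    + apply rt1n_tapp; [exact beta_appl | exact beta_appr | |eassumption].
      apply (rt1n_map _ _ tlam beta_lam); eassumption.
    + apply rt1n_one, beta_contr.
Qed.

Lemma beta_confluent : diamond beta_step^*.
Proof.
  apply (diamond_between _ _ _ par_beta_diamond), par_beta_rt1n.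
  induction 1; constructor; auto using par_beta_refl.
Qed.

Lemma eta_step_tren_inv x y : eta_step x y -> forall xi s, x = tren xi s ->
  exists s', y = tren xi s' /\ eta_step s s'.
Proof.
  induction 1; intros xi s E; destruct s; simpl in E; try discriminate; injection E; intros.
  1: { destruct s as [| |s s2]; simpl in *; try discriminate; injection H as E1 E2.
       destruct s2 as [[|]| |]; simpl in E2; try discriminate.
       destruct (tren_uprn_eq_tren_S _ _ _ (eq_sym E1)) as [s0 [-> ->]].
       exists s0; split; [reflexivity | constructor]. }
  all: subst; destruct (IHeta_step _ _ eq_refl) as [s' [-> Hs]].
  - exists (tlam s'); split; [reflexivity | constructor; assumption].
  - exists (tapp s' s2); split; [reflexivity | constructor; assumption].
  - exists (tapp s1 s'); split; [reflexivity | constructor; assumption].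
Qed.

Lemma beta_step_tren_inv x y : beta_step x y -> forall xi s, x = tren xi s ->
  exists s', y = tren xi s' /\ beta_step s s'.
Proof.
  induction 1; intros xi s E; destruct s; simpl in E; try discriminate; injection E; intros.
  1: { destruct s1; simpl in *; try discriminate; injection H0 as ->; subst.
       exists (tsub (scons s2 tvar) s1); split; [symmetry; apply tren_beta | constructor]. }
  all: subst; destruct (IHbeta_step _ _ eq_refl) as [s' [-> Hs]].
  - exists (tlam s'); split; [reflexivity | constructor; assumption].
  - exists (tapp s' s2); split; [reflexivity | constructor; assumption].
  - exists (tapp s1 s'); split; [reflexivity | constructor; assumption].
Qed.

Lemma eta_step_tren t u : eta_step t u -> forall xi, eta_step (tren xi t) (tren xi u).
Proof.
  induction 1; intros; simpl; try (constructor; auto).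
  rewrite tren_tren; change (fun n => uprn xi (S n)) with (fun n => S (xi n)).
  rewrite <- tren_tren; constructor.
Qed.

Lemma eta_step_tsub t u : eta_step t u -> forall sigma, eta_step (tsub sigma t) (tsub sigma u).
Proof.
  induction 1; intros; simpl; try (constructor; auto).
  rewrite tsub_tren; change (fun n => tup sigma (S n)) with (fun n => tren S (sigma n)).
  rewrite <- tren_tsub; constructor.
Qed.

Lemma eta_rt1n_tsub t : forall sigma sigma', (forall n, eta_step^* (sigma n) (sigma' n)) ->
  eta_step^* (tsub sigma t) (tsub sigma' t).
Proof.
  induction t; intros sigma sigma' H; simpl; auto.
  - apply (rt1n_map _ _ tlam eta_lam), IHt.
    intros [|n]; [apply rt1n_refl|].
    apply (rt1n_map _ _ _ (fun t u Htu => eta_step_tren t u Htu S)), H.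
  - apply rt1n_tapp; auto using eta_appl, eta_appr.
Qed.

Lemma eta_step_local t u v : eta_step t u -> eta_step t v ->
  exists w, clos_refl tm eta_step u w /\ clos_refl tm eta_step v w.
Proof.
  assert (eta_tren_S : forall s v, eta_step (tapp (tren S s) (tvar 0)) v ->
            exists s', v = tapp (tren S s') (tvar 0) /\ eta_step s s').
  { intros s v' Hv; inversion Hv as [| | ? ? ? Hs | ? ? ? Hs]; subst.
    - destruct (eta_step_tren_inv _ _ Hs _ _ eq_refl) as [s' [-> Hs']]; eauto.
    - inversion Hs. }
  intros Hu; revert v; induction Hu as [t|b b' Hb IH|a a' c Ha IH|a c c' Hc IH];
    intros v Hv; inversion Hv as [t0|b0 b0' Hb0|a0 a0' c0 Ha0|a0 c0 c0' Hc0]; subst.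
  - match goal with E : tren S _ = tren S _ |- _ => apply tren_S_inj in E; subst end.
    exists t; split; apply r_refl.
  - destruct (eta_tren_S _ _ Hb0) as [s' [-> Hs']].
    exists s'; split; [apply r_step; assumption | apply r_step, eta_contr].
  - destruct (eta_tren_S _ _ Hb) as [s' [-> Hs']].
    exists s'; split; [apply r_step, eta_contr | apply r_step; assumption].
  - destruct (IH _ Hb0) as [w [Hw1 Hw2]]; exists (tlam w).
    split; [destruct Hw1 | destruct Hw2]; constructor; constructor; assumption.
  - destruct (IH _ Ha0) as [w [Hw1 Hw2]]; exists (tapp w c).
    split; [destruct Hw1 | destruct Hw2]; constructor; constructor; assumption.
  - exists (tapp a' c0'); split; do 2 constructor; assumption.
  - exists (tapp a0' c'); split; do 2 constructor; assumption.
  - destruct (IH _ Hc0) as [w [Hw1 Hw2]]; exists (tapp a w).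
    split; [destruct Hw1 | destruct Hw2]; constructor; constructor; assumption.
Qed.

Lemma eta_confluent : diamond eta_step^*.
Proof.
  apply diamond_refl_rt1n; intros t u v [u' Hu|] [v' Hv|].
  - exact (eta_step_local _ _ _ Hu Hv).
  - exists u'; split; [apply r_refl | apply r_step; assumption].
  - exists v'; split; [apply r_step; assumption | apply r_refl].
  - exists t; split; apply r_refl.
Qed.

Lemma beta_eta_swap t u v : beta_step t u -> eta_step t v ->
  exists w, eta_step^* u w /\ clos_refl tm beta_step v w.
Proof.
  intros Hu; revert v; induction Hu as [b a|b b' Hb IH|a a' c Ha IH|a c c' Hc IH];
    intros v Hv; inversion Hv as [t0|b0 b0' Hb0|a0 a0' c0 Ha0|a0 c0 c0' Hc0]; subst.
  - inversion Ha0 as [t1| b1 b1' Hb1| |]; subst.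
    + eexists; split; [|apply r_refl]; simpl.
      rewrite tsub_tren, tsub_id; apply rt1n_refl.
    + exists (tsub (scons a tvar) b1'); split;
        [apply rt1n_one, eta_step_tsub | apply r_step, beta_contr]; assumption.
  - exists (tsub (scons c0' tvar) b); split; [|apply r_step, beta_contr].
    apply eta_rt1n_tsub; intros [|n]; [apply rt1n_one; assumption | apply rt1n_refl].
  - inversion Hb as [b1 a1| |a1 a1' c1 Ha1|a1 c1 c1' Hc1]; subst.
    + destruct v as [| b1' |]; simpl in *; try discriminate.
      match goal with E : tlam _ = tlam _ |- _ => injection E as -> end.
      eexists; split; [|apply r_refl].
      rewrite tsub_tren.
      replace (fun n => scons (tvar 0) tvar (uprn S n)) with tvar by funext_cases.
      rewrite tsub_id; apply rt1n_refl.
    + destruct (beta_step_tren_inv _ _ Ha1 _ _ eq_refl) as [s' [-> Hs']].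
      exists s'; split; [apply rt1n_one, eta_contr | apply r_step; assumption].
    + inversion Hc1.
  - destruct (IH _ Hb0) as [w [Hw1 Hw2]]; exists (tlam w); split.
    + apply (rt1n_map _ _ tlam eta_lam); assumption.
    + destruct Hw2; constructor; constructor; assumption.
  - destruct (IH _ Ha0) as [w [Hw1 Hw2]]; exists (tapp w c); split.
    + apply rt1n_tapp; auto using eta_appl, eta_appr, rt1n_refl.
    + destruct Hw2; constructor; constructor; assumption.
  - exists (tapp a' c0'); split; [apply rt1n_one | apply r_step]; constructor; assumption.
  - exists (tapp a0' c'); split; [apply rt1n_one | apply r_step]; constructor; assumption.
  - destruct (IH _ Hc0) as [w [Hw1 Hw2]]; exists (tapp a w); split.
    + apply rt1n_tapp; auto using eta_appl, eta_appr, rt1n_refl.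
    + destruct Hw2; constructor; constructor; assumption.
Qed.

Lemma be_confluent : diamond be_step^*.
Proof.
  apply union_confluent; [exact beta_confluent | exact eta_confluent |].
  apply commute_rt1n, beta_eta_swap.
Qed.

Lemma beta_eta_join t u : beta_eta t u -> exists w, be_step^* t w /\ be_step^* u w.
Proof.
  induction 1 as [t|t u _ [w [Hu Ht]]|t u v _ [w1 [Htw1 Huw1]] _ [w2 [Huw2 Hvw2]]
                 |t u _ [w [Htw Huw]]|t t' u u' _ [w1 [Htw1 Ht'w1]] _ [w2 [Huw2 Hu'w2]]|b a|t].
  - exists t; split; apply rt1n_refl.
  - exists w; split; assumption.
  - destruct (be_confluent _ _ _ Huw1 Huw2) as [w [Hw1w Hw2w]].
    exists w; split; eapply rt1n_concat; eassumption.
  - exists (tlam w); split; apply (rt1n_map be_step be_step tlam); try assumption;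
      intros ? ? [H|H]; (left + right); constructor; assumption.
  - exists (tapp w1 w2); split; apply rt1n_tapp; try assumption;
      intros ? ? ? [H|H]; (left + right); constructor; assumption.
  - exists (tsub (scons a tvar) b); split; [apply rt1n_one; left; constructor | apply rt1n_refl].
  - exists t; split; [apply rt1n_one; right; constructor | apply rt1n_refl].
Qed.

Scheme term_mind := Induction for term Sort Prop
  with jump_mind := Induction for jump Sort Prop.
Combined Scheme term_jump_mind from term_mind, jump_mind.

Lemma ren_o_ren_o :
  (forall M xi zeta, ren_o xi (ren_o zeta M) = ren_o (fun n => xi (zeta n)) M) /\
  (forall J xi zeta, ren_oj xi (ren_oj zeta J) = ren_oj (fun n => xi (zeta n)) J).
Proof. apply term_jump_mind; intros; simpl; f_equal; rewrite ?H, ?H0, ?uprn_comp; auto. Qed.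

Lemma ren_k_ren_k :
  (forall M xi zeta, ren_k xi (ren_k zeta M) = ren_k (fun n => xi (zeta n)) M) /\
  (forall J xi zeta, ren_kj xi (ren_kj zeta J) = ren_kj (fun n => xi (zeta n)) J).
Proof. apply term_jump_mind; intros; simpl; f_equal; rewrite ?H, ?H0, ?uprn_comp; auto. Qed.

Lemma ren_o_ren_k :
  (forall M xi zeta, ren_o xi (ren_k zeta M) = ren_k zeta (ren_o xi M)) /\
  (forall J xi zeta, ren_oj xi (ren_kj zeta J) = ren_kj zeta (ren_oj xi J)).
Proof. apply term_jump_mind; intros; simpl; f_equal; auto. Qed.

Lemma ren_o_id :
  (forall M, ren_o (fun n => n) M = M) /\ (forall J, ren_oj (fun n => n) J = J).
Proof. apply term_jump_mind; intros; simpl; f_equal; rewrite ?uprn_id; auto. Qed.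

Lemma ren_k_id :
  (forall M, ren_k (fun n => n) M = M) /\ (forall J, ren_kj (fun n => n) J = J).
Proof. apply term_jump_mind; intros; simpl; f_equal; rewrite ?uprn_id; auto. Qed.

(* Inverses of continuations, substituted for continuation variables: [l] _ and (J where x := _). *)
Inductive kctx : Type :=
| KJmp : nat -> kctx
| KWhere : jump -> kctx.

Definition kfill (c : kctx) (M : term) : jump :=
  match c with KJmp l => Jmp l M | KWhere J => JWhere J M end.

Definition kren_o (xi : nat -> nat) (c : kctx) : kctx :=
  match c with KJmp l => KJmp l | KWhere J => KWhere (ren_oj (uprn xi) J) end.

Definition kren_k (xi : nat -> nat) (c : kctx) : kctx :=
  match c with KJmp l => KJmp (xi l) | KWhere J => KWhere (ren_kj xi J) end.

Lemma kren_o_id c : kren_o (fun n => n) c = c.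
Proof. destruct c; simpl; rewrite ?uprn_id, ?(proj2 ren_o_id); reflexivity. Qed.

Lemma kren_k_id c : kren_k (fun n => n) c = c.
Proof. destruct c; simpl; rewrite ?(proj2 ren_k_id); reflexivity. Qed.

Lemma kren_k_kren_o xi c : kren_k xi (kren_o S c) = kren_o S (kren_k xi c).
Proof. destruct c; simpl; f_equal; symmetry; apply (proj2 ren_o_ren_k). Qed.

Lemma kren_k_kren_k xi zeta c : kren_k xi (kren_k zeta c) = kren_k (fun n => xi (zeta n)) c.
Proof. destruct c; simpl; f_equal; apply (proj2 ren_k_ren_k). Qed.

Fixpoint gsub (tau : nat -> term) (rho : nat -> kctx) (M : term) : term :=
  match M with
  | Var n => tau n
  | Lam B => Lam (gsub (up_o tau) (fun j => kren_o S (rho j)) B)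
  | App A B => App (gsub tau rho A) (gsub tau rho B)
  | Where L N => Where (gsub (up_o tau) (fun j => kren_o S (rho j)) L) (gsub tau rho N)
  | Mu J => Mu (gsubj (fun n => ren_k S (tau n)) (scons (KJmp 0) (fun j => kren_k S (rho j))) J)
  end
with gsubj (tau : nat -> term) (rho : nat -> kctx) (J : jump) : jump :=
  match J with
  | Jmp k N => kfill (rho k) (gsub tau rho N)
  | JWhere J' N => JWhere (gsubj (up_o tau) (fun j => kren_o S (rho j)) J') (gsub tau rho N)
  end.

Definition gsubk (tau : nat -> term) (rho : nat -> kctx) (c : kctx) : kctx :=
  match c with
  | KJmp l => rho l
  | KWhere J => KWhere (gsubj (up_o tau) (fun j => kren_o S (rho j)) J)
  end.

Lemma gsubj_kfill tau rho c M :
  gsubj tau rho (kfill c M) = kfill (gsubk tau rho c) (gsub tau rho M).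
Proof. destruct c; reflexivity. Qed.

Lemma gsub_ren :
  (forall M xo xk, gsub (fun n => Var (xo n)) (fun j => KJmp (xk j)) M = ren_o xo (ren_k xk M)) /\
  (forall J xo xk, gsubj (fun n => Var (xo n)) (fun j => KJmp (xk j)) J = ren_oj xo (ren_kj xk J)).
Proof.
  assert (up : forall xo, up_o (fun n => Var (xo n)) = (fun n => Var (uprn xo n)))
    by (intros; funext_cases).
  apply term_jump_mind; intros; simpl; f_equal; rewrite ?up; auto.
  rewrite <- H; f_equal; funext_cases.
Qed.

Lemma sub_o_gsub :
  (forall M sigma, sub_o sigma M = gsub sigma KJmp M) /\
  (forall J sigma, sub_oj sigma J = gsubj sigma KJmp J).
Proof.
  apply term_jump_mind; intros; simpl; f_equal; auto.
  rewrite H; f_equal; funext_cases.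
Qed.

Lemma ren_k_gsub :
  (forall M xi tau rho, ren_k xi (gsub tau rho M) =
     gsub (fun n => ren_k xi (tau n)) (fun j => kren_k xi (rho j)) M) /\
  (forall J xi tau rho, ren_kj xi (gsubj tau rho J) =
     gsubj (fun n => ren_k xi (tau n)) (fun j => kren_k xi (rho j)) J).
Proof.
  assert (up : forall xi tau, (fun n => ren_k xi (up_o tau n)) = up_o (fun n => ren_k xi (tau n))).
  { intros xi tau; apply functional_extensionality; intros [|n]; simpl; auto.
    symmetry; apply (proj1 ren_o_ren_k). }
  assert (upk : forall xi (rho : nat -> kctx), (fun j => kren_k xi (kren_o S (rho j))) =
                                (fun j => kren_o S (kren_k xi (rho j)))).
  { intros; apply functional_extensionality; intros; apply kren_k_kren_o. }
  apply term_jump_mind; intros; simpl; f_equal; rewrite ?H, ?H0, ?up, ?upk; auto.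
  - f_equal.
    + apply functional_extensionality; intros; rewrite !(proj1 ren_k_ren_k); reflexivity.
    + apply functional_extensionality; intros [|m]; simpl; rewrite ?kren_k_kren_k; reflexivity.
  - destruct (rho n); simpl; f_equal; auto.
Qed.

Lemma gsub_ren_k :
  (forall M xi tau rho, gsub tau rho (ren_k xi M) = gsub tau (fun j => rho (xi j)) M) /\
  (forall J xi tau rho, gsubj tau rho (ren_kj xi J) = gsubj tau (fun j => rho (xi j)) J).
Proof.
  apply term_jump_mind; intros; simpl; f_equal; rewrite ?H, ?H0; auto.
  f_equal; funext_cases.
Qed.

Lemma kfill_cong c M M' : ccv_eq M M' -> ccvj_eq (kfill c M) (kfill c M').
Proof. destruct c; simpl; intros; [apply ccvj_Jmp | apply ccvj_JWhere]; auto using ccvj_refl. Qed.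

Lemma kfill_where c L N : ccvj_eq (kfill c (Where L N)) (JWhere (kfill (kren_o S c) L) N).
Proof. destruct c; [apply ccvj_E3 | apply ccvj_E1]. Qed.

Lemma ccvj_jmp_mu_shift l J : ccvj_eq (Jmp l (Mu (ren_kj S J))) J.
Proof.
  eapply ccvj_trans; [apply ccvj_mu|].
  rewrite (proj2 ren_k_ren_k), (proj2 ren_k_id); apply ccvj_refl.
Qed.

(* Rewriting (J where x := V) to [0]((mu k. J) where x := V) lets the term rule for values apply. *)
Lemma ccvj_where_value J V : is_value V = true ->
  ccvj_eq (JWhere J V) (gsubj (scons V Var) KJmp J).
Proof.
  intros HV.
  eapply ccvj_trans;
    [apply ccvj_JWhere; [apply ccvj_sym, (ccvj_jmp_mu_shift 0) | apply ccv_refl]|].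
  eapply ccvj_trans; [apply ccvj_sym, ccvj_E3|].
  eapply ccvj_trans; [apply ccvj_Jmp, ccv_let, HV|].
  rewrite (proj1 sub_o_gsub); simpl.
  eapply ccvj_trans; [apply ccvj_mu|].
  rewrite (proj2 gsub_ren_k), (proj2 ren_k_gsub).
  replace (fun n => ren_k (scons 0 (fun n => n)) (ren_k S (scons V Var n))) with (scons V Var)
    by (apply functional_extensionality; intros;
        rewrite (proj1 ren_k_ren_k), (proj1 ren_k_id); reflexivity).
  apply ccvj_refl.
Qed.

Definition kwhere_at (k : nat) (J1 : jump) : nat -> kctx :=
  fun j => if Nat.eqb j k then KWhere (ren_kj S J1) else KJmp j.

Lemma kwhere_at_kren_o k J1 :
  (fun j => kren_o S (kwhere_at k J1 j)) = kwhere_at k (ren_oj (uprn S) J1).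
Proof.
  apply functional_extensionality; intros j; unfold kwhere_at.
  destruct (Nat.eqb j k); simpl; f_equal; apply (proj2 ren_o_ren_k).
Qed.

Lemma kwhere_at_kren_k k J1 :
  scons (KJmp 0) (fun j => kren_k S (kwhere_at k J1 j)) = kwhere_at (S k) (ren_kj S J1).
Proof.
  apply functional_extensionality; intros [|j]; unfold kwhere_at; simpl; auto.
  destruct (Nat.eqb j k); reflexivity.
Qed.

Lemma csub_mu_gsub :
  (forall X k J1, ccv_eq (csub k (Mu (ren_kj (fun j => S (S j)) J1)) X)
                         (gsub Var (kwhere_at k J1) X)) /\
  (forall X k J1, ccvj_eq (csubj k (Mu (ren_kj (fun j => S (S j)) J1)) X)
                          (gsubj Var (kwhere_at k J1) X)).
Proof.
  assert (Hren_o : forall xi J1, ren_o xi (Mu (ren_kj (fun j => S (S j)) J1)) =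
                                 Mu (ren_kj (fun j => S (S j)) (ren_oj xi J1)))
    by (intros; simpl; f_equal; apply (proj2 ren_o_ren_k)).
  assert (Hren_k : forall J1, ren_k S (Mu (ren_kj (fun j => S (S j)) J1)) =
                              Mu (ren_kj (fun j => S (S j)) (ren_kj S J1)))
    by (intros; simpl; f_equal; rewrite !(proj2 ren_k_ren_k); reflexivity).
  assert (up_o_Var : up_o Var = Var) by funext_cases.
  apply term_jump_mind; intros; cbn [csub csubj gsub gsubj];
    rewrite ?Hren_o, ?Hren_k, ?up_o_Var, ?kwhere_at_kren_o, ?kwhere_at_kren_k.
  - apply ccv_refl.
  - apply ccv_Lam; auto.
  - apply ccv_App; auto.
  - apply ccv_Where; auto.
  - apply ccv_Mu; auto.
  - change (kwhere_at k J1 n) with (if Nat.eqb n k then KWhere (ren_kj S J1) else KJmp n).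
    destruct (Nat.eqb n k) eqn:E; simpl.
    + eapply ccvj_trans; [apply ccvj_Jmp, ccv_Where; [apply ccv_refl | apply H]|].
      eapply ccvj_trans; [apply ccvj_Jmp, ccv_E2|].
      eapply ccvj_trans; [apply ccvj_mu|]; simpl.
      apply Nat.eqb_eq in E; subst.
      rewrite (proj2 ren_k_ren_k), (proj1 ren_k_ren_k), (proj1 ren_k_id); apply ccvj_refl.
    + apply ccvj_Jmp; auto.
  - apply ccvj_JWhere; auto.
Qed.

(* Rewriting (J0 where x := mu k. J) to [0]((mu k'. J0) where x := mu k. J) lets the let-mu rule
   apply. *)
Lemma kfill_mu c J : ccvj_eq (kfill c (Mu J)) (gsubj Var (scons c KJmp) J).
Proof.
  destruct c as [l|J0]; simpl.
  - eapply ccvj_trans; [apply ccvj_mu|].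
    replace (scons (KJmp l) KJmp) with (fun j => KJmp (scons l (fun n => n) j)) by funext_cases.
    change Var with (fun n => Var ((fun n => n) n)).
    rewrite (proj2 gsub_ren), (proj2 ren_o_id); apply ccvj_refl.
  - eapply ccvj_trans;
      [apply ccvj_JWhere; [apply ccvj_sym, (ccvj_jmp_mu_shift 0) | apply ccv_refl]|].
    eapply ccvj_trans; [apply ccvj_sym, ccvj_E3|].
    eapply ccvj_trans; [apply ccvj_Jmp, ccv_letmu|].
    eapply ccvj_trans.
    { apply ccvj_Jmp, ccv_Mu.
      replace (ren_k S (Mu (ren_kj S J0))) with (Mu (ren_kj (fun j => S (S j)) J0))
        by (simpl; f_equal; rewrite (proj2 ren_k_ren_k); reflexivity).
      apply (proj2 csub_mu_gsub). }
    eapply ccvj_trans; [apply ccvj_mu|].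
    rewrite (proj2 ren_k_gsub).
    replace (fun j => kren_k (scons 0 (fun n => n)) (kwhere_at 0 J0 j))
      with (scons (KWhere J0) KJmp)
      by (apply functional_extensionality; intros [|j]; unfold kwhere_at; simpl; auto;
          rewrite (proj2 ren_k_ren_k), (proj2 ren_k_id); reflexivity).
    apply ccvj_refl.
Qed.

(* The image of the CPS translation: W values, T computations, Q answers and K continuations.
   In [sorted G s t], [G n] tells whether the target variable [n] is an ordinary (W) or a
   continuation (K) variable. *)
Inductive cps_sort := sW | sT | sQ | sK.

Fixpoint sorted (G : nat -> bool) (s : cps_sort) (t : tm) {struct t} : bool :=
  match s, t with
  | sW, tvar n => G n
  | sW, tlam b => sorted (scons true G) sT b
  | sT, tlam b => sorted (scons false G) sQ b
  | sT, tapp a b => sorted G sW a && sorted G sW b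
  | sQ, tapp a b => (sorted G sK a && sorted G sW b) || (sorted G sT a && sorted G sK b)
  | sK, tvar n => negb (G n)
  | sK, tlam b => sorted (scons true G) sQ b
  | _, _ => false
  end.

(* The de Bruijn index of the target variable [n] among the ordinary (resp. continuation)
   variables of the source. *)
Fixpoint count_o (G : nat -> bool) (n : nat) : nat :=
  match n with 0 => 0 | S m => (if G 0 then 1 else 0) + count_o (fun i => G (S i)) m end.

Fixpoint count_k (G : nat -> bool) (n : nat) : nat :=
  match n with 0 => 0 | S m => (if G 0 then 0 else 1) + count_k (fun i => G (S i)) m end.

Fixpoint inv_W (G : nat -> bool) (t : tm) : term :=
  match t with
  | tvar n => Var (count_o G n)
  | tlam b => Lam (inv_T (scons true G) b)
  | _ => Var 0
  end
with inv_T (G : nat -> bool) (t : tm) : term :=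
  match t with
  | tlam b => Mu (inv_Q (scons false G) b)
  | tapp a b => App (inv_W G a) (inv_W G b)
  | _ => Var 0
  end
with inv_Q (G : nat -> bool) (t : tm) : jump :=
  match t with
  | tapp a b =>
      if sorted G sW b then kfill (inv_K G a) (inv_W G b) else kfill (inv_K G b) (inv_T G a)
  | _ => Jmp 0 (Var 0)
  end
with inv_K (G : nat -> bool) (t : tm) : kctx :=
  match t with
  | tvar n => KJmp (count_k G n)
  | tlam b => KWhere (inv_Q (scons true G) b)
  | _ => KJmp 0
  end.

Lemma sorted_disjoint t : forall G,
  sorted G sW t && sorted G sK t = false /\ sorted G sT t && sorted G sQ t = false.
Proof.
  induction t as [n|b IH|a IHa c IHc]; intros G; simpl.
  - destruct (G n); auto.
  - destruct (IH (scons true G)) as [_ H]; split; [assumption|].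
    destruct (sorted (scons false G) sQ b); reflexivity.
  - destruct (IHa G) as [Ha _], (IHc G) as [Hc _]; split; [reflexivity|].
    destruct (sorted G sW a), (sorted G sK a), (sorted G sW c), (sorted G sK c), (sorted G sT a);
      simpl in *; congruence.
Qed.

Lemma sorted_K_not_W G t : sorted G sK t = true -> sorted G sW t = false.
Proof.
  intros H; destruct (sorted_disjoint t G) as [D _].
  rewrite H, andb_true_r in D; assumption.
Qed.

Lemma sorted_Q_app_inv G a c : sorted G sQ (tapp a c) = true ->
  (sorted G sW c = true /\ sorted G sK a = true) \/
  (sorted G sW c = false /\ sorted G sT a = true /\ sorted G sK c = true).
Proof.
  simpl; intros H; destruct (sorted G sW c) eqn:Wc.
  - left; split; [reflexivity|].
    destruct (sorted G sK a) eqn:Ka; [reflexivity|].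
    rewrite (sorted_K_not_W G c) in Wc; [discriminate|].
    simpl in H; apply andb_prop in H as [_ H]; assumption.
  - right; rewrite andb_false_r in H; apply andb_prop in H as [Ta Kc]; auto.
Qed.

Lemma inv_W_value G t : is_value (inv_W G t) = true.
Proof. destruct t; reflexivity. Qed.

Lemma kfill_ren xo xk c M :
  ren_oj xo (ren_kj xk (kfill c M)) = kfill (kren_o xo (kren_k xk c)) (ren_o xo (ren_k xk M)).
Proof. destruct c; reflexivity. Qed.

Definition ren_compat (G G' : nat -> bool) (xi xo xk : nat -> nat) : Prop :=
  forall n, G' (xi n) = G n /\
            (G n = true -> count_o G' (xi n) = xo (count_o G n)) /\
            (G n = false -> count_k G' (xi n) = xk (count_k G n)).

Lemma ren_compat_up G G' xi xo xk b : ren_compat G G' xi xo xk ->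
  ren_compat (scons b G) (scons b G') (uprn xi)
             (if b then uprn xo else xo) (if b then xk else uprn xk).
Proof.
  intros H [|n]; simpl.
  - destruct b; repeat split; auto; discriminate.
  - destruct (H n) as [A [B C]]; repeat split; auto; destruct b; intros; simpl; f_equal; auto.
Qed.

Lemma inv_tren t : forall G G' xi xo xk, ren_compat G G' xi xo xk ->
  (forall s, sorted G' s (tren xi t) = sorted G s t) /\
  (sorted G sW t = true -> inv_W G' (tren xi t) = ren_o xo (ren_k xk (inv_W G t))) /\
  (sorted G sT t = true -> inv_T G' (tren xi t) = ren_o xo (ren_k xk (inv_T G t))) /\
  (sorted G sQ t = true -> inv_Q G' (tren xi t) = ren_oj xo (ren_kj xk (inv_Q G t))) /\
  (sorted G sK t = true -> inv_K G' (tren xi t) = kren_o xo (kren_k xk (inv_K G t))).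
Proof.
  induction t as [n|b IH|a IHa c IHc]; intros G G' xi xo xk H; simpl.
  - destruct (H n) as [A [B C]]; repeat split; try discriminate.
    + destruct s; simpl; rewrite ?A; reflexivity.
    + intros E; rewrite B; auto.
    + intros E; rewrite C; [reflexivity|]; destruct (G n); simpl in *; congruence.
  - destruct (IH _ _ _ _ _ (ren_compat_up _ _ _ _ _ true H)) as [S1 [_ [T1 [Q1 _]]]].
    destruct (IH _ _ _ _ _ (ren_compat_up _ _ _ _ _ false H)) as [S2 [_ [_ [Q2 _]]]].
    repeat split; try discriminate.
    + destruct s; simpl; auto.
    + intros E; rewrite T1; auto.
    + intros E; rewrite Q2; auto.
    + intros E; rewrite Q1; auto.
  - destruct (IHa _ _ _ _ _ H) as [Sa [Wa [_ [_ Ka]]]].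
    destruct (IHc _ _ _ _ _ H) as [Sc [Wc [Tc [_ Kc]]]].
    destruct (IHa _ _ _ _ _ H) as [_ [_ [Ta _]]].
    repeat split; try discriminate.
    + destruct s; simpl; rewrite ?Sa, ?Sc; reflexivity.
    + intros E; apply andb_prop in E as [E1 E2]; rewrite Wa, Wc; auto.
    + intros E; rewrite Sc.
      destruct (sorted_Q_app_inv _ _ _ E) as [[W K]|[W [T K]]]; rewrite W, kfill_ren;
        [rewrite Ka, Wc | rewrite Kc, Ta]; auto.
Qed.

Lemma ren_compat_shift_o G : ren_compat G (scons true G) S S (fun n => n).
Proof. intros n; repeat split. Qed.

Lemma ren_compat_shift_k G : ren_compat G (scons false G) S (fun n => n) S.
Proof. intros n; repeat split. Qed.

Lemma sorted_shift G b s t : sorted (scons b G) s (tren S t) = sorted G s t.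
Proof.
  destruct b; [apply (inv_tren t _ _ _ _ _ (ren_compat_shift_o G))
              | apply (inv_tren t _ _ _ _ _ (ren_compat_shift_k G))].
Qed.

Lemma inv_W_shift_o G t : sorted G sW t = true ->
  inv_W (scons true G) (tren S t) = ren_o S (inv_W G t).
Proof.
  intros H; destruct (inv_tren t _ _ _ _ _ (ren_compat_shift_o G)) as [_ [W _]].
  rewrite W, (proj1 ren_k_id); auto.
Qed.

Lemma inv_W_shift_k G t : sorted G sW t = true ->
  inv_W (scons false G) (tren S t) = ren_k S (inv_W G t).
Proof.
  intros H; destruct (inv_tren t _ _ _ _ _ (ren_compat_shift_k G)) as [_ [W _]].
  rewrite W, (proj1 ren_o_id); auto.
Qed.

Lemma inv_T_shift_k G t : sorted G sT t = true ->
  inv_T (scons false G) (tren S t) = ren_k S (inv_T G t).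
Proof.
  intros H; destruct (inv_tren t _ _ _ _ _ (ren_compat_shift_k G)) as [_ [_ [T _]]].
  rewrite T, (proj1 ren_o_id); auto.
Qed.

Lemma inv_K_shift_o G t : sorted G sK t = true ->
  inv_K (scons true G) (tren S t) = kren_o S (inv_K G t).
Proof.
  intros H; destruct (inv_tren t _ _ _ _ _ (ren_compat_shift_o G)) as [_ [_ [_ [_ K]]]].
  rewrite K, kren_k_id; auto.
Qed.

Lemma inv_K_shift_k G t : sorted G sK t = true ->
  inv_K (scons false G) (tren S t) = kren_k S (inv_K G t).
Proof.
  intros H; destruct (inv_tren t _ _ _ _ _ (ren_compat_shift_k G)) as [_ [_ [_ [_ K]]]].
  rewrite K, kren_o_id; auto.
Qed.

Definition sub_compat (G G' : nat -> bool) (sigma : nat -> tm) (tau : nat -> term)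
    (rho : nat -> kctx) : Prop :=
  forall n,
    (G n = true -> sorted G' sW (sigma n) = true /\ inv_W G' (sigma n) = tau (count_o G n)) /\
    (G n = false -> sorted G' sK (sigma n) = true /\ inv_K G' (sigma n) = rho (count_k G n)).

Lemma sub_compat_up_o G G' sigma tau rho : sub_compat G G' sigma tau rho ->
  sub_compat (scons true G) (scons true G') (tup sigma) (up_o tau) (fun j => kren_o S (rho j)).
Proof.
  intros H [|n]; simpl; [split; [split; reflexivity | discriminate]|].
  destruct (H n) as [A B]; split; intros E; rewrite sorted_shift.
  - destruct (A E) as [A1 A2]; rewrite inv_W_shift_o, A2; auto.
  - destruct (B E) as [B1 B2]; rewrite inv_K_shift_o, B2; auto.
Qed.

Lemma sub_compat_up_k G G' sigma tau rho : sub_compat G G' sigma tau rho ->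
  sub_compat (scons false G) (scons false G') (tup sigma) (fun n => ren_k S (tau n))
             (scons (KJmp 0) (fun j => kren_k S (rho j))).
Proof.
  intros H [|n]; simpl; [split; [discriminate | split; reflexivity]|].
  destruct (H n) as [A B]; split; intros E; rewrite sorted_shift.
  - destruct (A E) as [A1 A2]; rewrite inv_W_shift_k, A2; auto.
  - destruct (B E) as [B1 B2]; rewrite inv_K_shift_k, B2; auto.
Qed.

Lemma inv_tsub t : forall G G' sigma tau rho, sub_compat G G' sigma tau rho ->
  (sorted G sW t = true ->
     sorted G' sW (tsub sigma t) = true /\ inv_W G' (tsub sigma t) = gsub tau rho (inv_W G t)) /\
  (sorted G sT t = true ->
     sorted G' sT (tsub sigma t) = true /\ inv_T G' (tsub sigma t) = gsub tau rho (inv_T G t)) /\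
  (sorted G sQ t = true ->
     sorted G' sQ (tsub sigma t) = true /\ inv_Q G' (tsub sigma t) = gsubj tau rho (inv_Q G t)) /\
  (sorted G sK t = true ->
     sorted G' sK (tsub sigma t) = true /\ inv_K G' (tsub sigma t) = gsubk tau rho (inv_K G t)).
Proof.
  induction t as [n|b IH|a IHa c IHc]; intros G G' sigma tau rho H; simpl.
  - destruct (H n) as [A B]; refine (conj _ (conj _ (conj _ _))); intros E; try discriminate.
    + apply A, E.
    + apply B; destruct (G n); simpl in *; congruence.
  - destruct (IH _ _ _ _ _ (sub_compat_up_o _ _ _ _ _ H)) as [_ [T1 [Q1 _]]].
    destruct (IH _ _ _ _ _ (sub_compat_up_k _ _ _ _ _ H)) as [_ [_ [Q2 _]]].
    refine (conj _ (conj _ (conj _ _))); intros E; try discriminate.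
    + destruct (T1 E) as [-> ->]; auto.
    + destruct (Q2 E) as [-> ->]; auto.
    + destruct (Q1 E) as [-> ->]; auto.
  - destruct (IHa _ _ _ _ _ H) as [Wa [Ta [_ Ka]]], (IHc _ _ _ _ _ H) as [Wc [_ [_ Kc]]].
    refine (conj _ (conj _ (conj _ _))); intros E; try discriminate; split.
    + apply andb_prop in E as [E1 E2]; rewrite (proj1 (Wa E1)), (proj1 (Wc E2)); reflexivity.
    + apply andb_prop in E as [E1 E2]; rewrite (proj2 (Wa E1)), (proj2 (Wc E2)); reflexivity.
    + destruct (sorted_Q_app_inv _ _ _ E) as [[W K]|[W [T K]]].
      * rewrite (proj1 (Ka K)), (proj1 (Wc W)); reflexivity.
      * rewrite (proj1 (Ta T)), (proj1 (Kc K)); apply orb_true_r.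
    + destruct (sorted_Q_app_inv _ _ _ E) as [[W K]|[W [T K]]]; rewrite W, gsubj_kfill.
      * rewrite (proj1 (Wc W)), (proj2 (Ka K)), (proj2 (Wc W)); reflexivity.
      * rewrite (sorted_K_not_W _ _ (proj1 (Kc K))), (proj2 (Kc K)), (proj2 (Ta T)); reflexivity.
Qed.

Lemma sub_compat_beta_W G a : sorted G sW a = true ->
  sub_compat (scons true G) G (scons a tvar) (scons (inv_W G a) Var) KJmp.
Proof. intros H [|n]; simpl; split; intros E; try discriminate; rewrite ?E; auto. Qed.

Lemma sub_compat_beta_K G a : sorted G sK a = true ->
  sub_compat (scons false G) G (scons a tvar) Var (scons (inv_K G a) KJmp).
Proof. intros H [|n]; simpl; split; intros E; try discriminate; rewrite ?E; auto. Qed.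

Definition inv_preserved (t u : tm) : Prop := forall G,
  (sorted G sW t = true -> sorted G sW u = true /\ ccv_eq (inv_W G t) (inv_W G u)) /\
  (sorted G sT t = true -> sorted G sT u = true /\ ccv_eq (inv_T G t) (inv_T G u)) /\
  (sorted G sQ t = true -> sorted G sQ u = true /\ ccvj_eq (inv_Q G t) (inv_Q G u)) /\
  (sorted G sK t = true -> sorted G sK u = true /\
     forall M, ccvj_eq (kfill (inv_K G t) M) (kfill (inv_K G u) M)).

Lemma inv_preserved_lam b b' : inv_preserved b b' -> inv_preserved (tlam b) (tlam b').
Proof.
  intros H G; simpl.
  destruct (H (scons true G)) as [_ [T1 [Q1 _]]], (H (scons false G)) as [_ [_ [Q2 _]]].
  refine (conj _ (conj _ (conj _ _))); intros E; try discriminate.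
  - destruct (T1 E); split; [|apply ccv_Lam]; assumption.
  - destruct (Q2 E); split; [|apply ccv_Mu]; assumption.
  - destruct (Q1 E); split; [|intros M; apply ccvj_JWhere, ccv_refl]; assumption.
Qed.

Lemma inv_preserved_appl a a' c : inv_preserved a a' -> inv_preserved (tapp a c) (tapp a' c).
Proof.
  intros H G; destruct (H G) as [W [T [_ K]]].
  refine (conj _ (conj _ (conj _ _))); intros E; try discriminate.
  - simpl in *; apply andb_prop in E as [E1 E2]; destruct (W E1) as [-> HW].
    rewrite E2; split; [reflexivity | apply ccv_App; [assumption | apply ccv_refl]].
  - destruct (sorted_Q_app_inv _ _ _ E) as [[Wc Ka]|[Wc [Ta Kc]]]; simpl; rewrite Wc.
    + destruct (K Ka) as [-> HK]; split; auto.
    + destruct (T Ta) as [-> HT]; rewrite Kc, orb_true_r.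
      split; [reflexivity | apply kfill_cong; assumption].
Qed.

Lemma inv_preserved_appr a c c' : inv_preserved c c' -> inv_preserved (tapp a c) (tapp a c').
Proof.
  intros H G; destruct (H G) as [W [_ [_ K]]].
  refine (conj _ (conj _ (conj _ _))); intros E; try discriminate.
  - simpl in *; apply andb_prop in E as [E1 E2]; destruct (W E2) as [-> HW].
    rewrite E1; split; [reflexivity | apply ccv_App; [apply ccv_refl | assumption]].
  - destruct (sorted_Q_app_inv _ _ _ E) as [[Wc Ka]|[Wc [Ta Kc]]]; simpl; rewrite Wc.
    + destruct (W Wc) as [-> HW]; rewrite Ka.
      split; [reflexivity | apply kfill_cong; assumption].
    + destruct (K Kc) as [Kc' HK]; rewrite (sorted_K_not_W _ _ Kc'), Ta, Kc', orb_true_r.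
      split; auto.
Qed.

Lemma beta_step_inv_preserved t u : beta_step t u -> inv_preserved t u.
Proof.
  induction 1 as [b a| | |];
    auto using inv_preserved_lam, inv_preserved_appl, inv_preserved_appr.
  intros G; refine (conj _ (conj _ (conj _ _))); intros E; try discriminate.
  - simpl in E; apply andb_prop in E as [Eb Ea].
    destruct (proj1 (proj2 (inv_tsub b _ _ _ _ _ (sub_compat_beta_W G a Ea))) Eb) as [-> ->].
    split; [reflexivity|]; simpl.
    eapply ccv_trans; [apply ccv_beta, inv_W_value|].
    eapply ccv_trans; [apply ccv_let, inv_W_value|].
    rewrite (proj1 sub_o_gsub); apply ccv_refl.
  - destruct (sorted_Q_app_inv _ _ _ E) as [[Wa Kb]|[Wa [Tb Ka]]]; simpl in *.
    + destruct (proj1 (proj2 (proj2 (inv_tsub b _ _ _ _ _ (sub_compat_beta_W G a Wa)))) Kb)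
        as [-> ->].
      rewrite Wa; split; [reflexivity | apply ccvj_where_value, inv_W_value].
    + destruct (proj1 (proj2 (proj2 (inv_tsub b _ _ _ _ _ (sub_compat_beta_K G a Ka)))) Tb)
        as [-> ->].
      rewrite Wa; split; [reflexivity | apply kfill_mu].
Qed.

Lemma eta_step_inv_preserved t u : eta_step t u -> inv_preserved t u.
Proof.
  induction 1 as [t| | |];
    auto using inv_preserved_lam, inv_preserved_appl, inv_preserved_appr.
  intros G; refine (conj _ (conj _ (conj _ _))); intros E; try discriminate; simpl in E.
  - rewrite andb_true_r, sorted_shift in E; split; [assumption|]; simpl.
    rewrite inv_W_shift_o by assumption; apply ccv_eta, inv_W_value.
  - rewrite andb_false_r, andb_true_r, sorted_shift in E; split; [assumption|]; simpl.
    rewrite inv_T_shift_k by assumption; apply ccv_mueta.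
  - rewrite andb_false_r, andb_true_r, sorted_shift, orb_false_r in E; split; [assumption|].
    intros M; simpl; rewrite inv_K_shift_o by assumption.
    eapply ccvj_trans; [apply ccvj_sym, kfill_where | apply kfill_cong, ccv_letid].
Qed.

Lemma be_rt1n_inv_T t u G : be_step^* t u -> sorted G sT t = true ->
  sorted G sT u = true /\ ccv_eq (inv_T G t) (inv_T G u).
Proof.
  intros H; revert G; induction H as [t|t t' u Htt' _ IH]; intros G E.
  - split; [assumption | apply ccv_refl].
  - assert (P : inv_preserved t t')
      by (destruct Htt'; [apply beta_step_inv_preserved | apply eta_step_inv_preserved];
          assumption).
    destruct (proj1 (proj2 (P G)) E) as [E' H1], (IH G E') as [E'' H2].
    split; [assumption | eapply ccv_trans; eassumption].
Qed.

Definition ren_env (xi : nat -> nat) (e : nat -> tm) : nat -> tm := fun n => tren xi (e n).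

Lemma tren_uprn_S xi t : tren (uprn xi) (tren S t) = tren S (tren xi t).
Proof. rewrite !tren_tren; reflexivity. Qed.

Lemma ren_env_sh xi e : ren_env (uprn xi) (sh e) = sh (ren_env xi e).
Proof. apply functional_extensionality; intros n; apply tren_uprn_S. Qed.

Lemma ren_env_scons0 xi e :
  ren_env (uprn xi) (scons (tvar 0) (sh e)) = scons (tvar 0) (sh (ren_env xi e)).
Proof. apply functional_extensionality; intros [|n]; [reflexivity | apply tren_uprn_S]. Qed.

Lemma tr_tren :
  (forall M xi eo ek,
     (forall K, tr (ren_env xi eo) (ren_env xi ek) M (tren xi K) = tren xi (tr eo ek M K)) /\
     star (ren_env xi eo) (ren_env xi ek) M = option_map (tren xi) (star eo ek M)) /\
  (forall J xi eo ek, trj (ren_env xi eo) (ren_env xi ek) J = tren xi (trj eo ek J)).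
Proof.
  apply term_jump_mind; intros; simpl.
  - split; reflexivity.
  - pose proof (proj1 (H (uprn (uprn xi)) (sh (scons (tvar 0) (sh eo))) (sh (sh ek))) (tvar 0))
      as IH.
    rewrite !ren_env_sh, ren_env_scons0 in IH; simpl in IH; rewrite IH; split; reflexivity.
  - destruct (H xi eo ek) as [T1 ->], (H0 xi eo ek) as [T2 ->]; split; [intros K|reflexivity].
    destruct (star eo ek t) as [v1|], (star eo ek t0) as [v2|]; simpl; [reflexivity | ..].
    + rewrite <- T2; simpl; rewrite !tren_uprn_S; reflexivity.
    + rewrite <- T1; simpl; rewrite !tren_uprn_S; reflexivity.
    + pose proof (proj1 (H0 (uprn xi) (sh eo) (sh ek))) as IH.
      rewrite !ren_env_sh in IH.
      rewrite <- T1; simpl; rewrite <- IH; simpl; rewrite !tren_uprn_S; reflexivity.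
  - pose proof (proj1 (H (uprn xi) (scons (tvar 0) (sh eo)) (sh ek))) as IH.
    rewrite ren_env_sh, ren_env_scons0 in IH.
    split; [intros K | reflexivity].
    rewrite <- (proj1 (H0 _ _ _)); simpl; rewrite <- IH, tren_uprn_S; reflexivity.
  - pose proof (H (uprn xi) (sh eo) (scons (tvar 0) (sh ek))) as IH.
    rewrite ren_env_sh, ren_env_scons0 in IH.
    split; [intros K | reflexivity]; rewrite IH; reflexivity.
  - apply H.
  - pose proof (H (uprn xi) (scons (tvar 0) (sh eo)) (sh ek)) as IH.
    rewrite ren_env_sh, ren_env_scons0 in IH.
    rewrite <- (proj1 (H0 _ _ _)); simpl; rewrite IH; reflexivity.
Qed.

Lemma star_sh eo ek M : star (sh eo) (sh ek) M = option_map (tren S) (star eo ek M).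
Proof. exact (proj2 (proj1 tr_tren M S eo ek)). Qed.

Lemma tr_value eo ek M v K : star eo ek M = Some v -> tr eo ek M K = tapp K v.
Proof. destruct M; simpl; intros E; try discriminate; injection E as <-; reflexivity. Qed.

Lemma is_value_ren_o xi M : is_value (ren_o xi M) = is_value M.
Proof. destruct M; reflexivity. Qed.

Lemma is_value_ren_k xi M : is_value (ren_k xi M) = is_value M.
Proof. destruct M; reflexivity. Qed.

Lemma kfill_app_let_l c N M : is_value N = false ->
  ccvj_eq (kfill c (App N M)) (JWhere (kfill (kren_o S c) (App (Var 0) (ren_o S M))) N).
Proof.
  intros HN; eapply ccvj_trans; [apply kfill_cong, ccv_appL, HN | apply kfill_where].
Qed.

Lemma kfill_app_let_r c V N : is_value V = true -> is_value N = false ->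
  ccvj_eq (kfill c (App V N)) (JWhere (kfill (kren_o S c) (App (ren_o S V) (Var 0))) N).
Proof.
  intros HV HN; eapply ccvj_trans; [apply kfill_cong, ccv_appR; assumption | apply kfill_where].
Qed.

Lemma kfill_app_let_lr c N1 N2 : is_value N1 = false -> is_value N2 = false ->
  ccvj_eq (kfill c (App N1 N2))
    (JWhere (JWhere (kfill (kren_o S (kren_o S c)) (App (Var 1) (Var 0))) (ren_o S N2)) N1).
Proof.
  intros H1 H2; eapply ccvj_trans; [apply kfill_app_let_l, H1|].
  apply ccvj_JWhere; [|apply ccv_refl].
  apply (kfill_app_let_r _ (Var 0)); [reflexivity | rewrite is_value_ren_o; assumption].
Qed.

Definition env_o_ok (G : nat -> bool) (eo : nat -> tm) (xo : nat -> nat) : Prop :=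
  forall n, exists m, eo n = tvar m /\ G m = true /\ count_o G m = xo n.

Definition env_k_ok (G : nat -> bool) (ek : nat -> tm) (xk : nat -> nat) : Prop :=
  forall n, exists m, ek n = tvar m /\ G m = false /\ count_k G m = xk n.

Section EnvironmentExtension.

Variables (G : nat -> bool) (eo ek : nat -> tm) (xo xk : nat -> nat).

Local Ltac extend_env E C := unfold sh; simpl; rewrite E; simpl; rewrite <- C; auto.

Lemma env_o_shift_o : env_o_ok G eo xo -> env_o_ok (scons true G) (sh eo) (fun n => S (xo n)).
Proof. intros H n; destruct (H n) as [m [E [Gm C]]]; exists (S m); extend_env E C. Qed.

Lemma env_o_shift_k : env_o_ok G eo xo -> env_o_ok (scons false G) (sh eo) xo.
Proof. intros H n; destruct (H n) as [m [E [Gm C]]]; exists (S m); extend_env E C. Qed.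

Lemma env_k_shift_o : env_k_ok G ek xk -> env_k_ok (scons true G) (sh ek) xk.
Proof. intros H n; destruct (H n) as [m [E [Gm C]]]; exists (S m); extend_env E C. Qed.

Lemma env_k_shift_k : env_k_ok G ek xk -> env_k_ok (scons false G) (sh ek) (fun n => S (xk n)).
Proof. intros H n; destruct (H n) as [m [E [Gm C]]]; exists (S m); extend_env E C. Qed.

Lemma env_o_cons : env_o_ok G eo xo -> env_o_ok (scons true G) (scons (tvar 0) (sh eo)) (uprn xo).
Proof.
  intros H [|n]; [exists 0; auto|].
  destruct (H n) as [m [E [Gm C]]]; exists (S m); extend_env E C.
Qed.

Lemma env_k_cons : env_k_ok G ek xk -> env_k_ok (scons false G) (scons (tvar 0) (sh ek)) (uprn xk).
Proof.
  intros H [|n]; [exists 0; auto|].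
  destruct (H n) as [m [E [Gm C]]]; exists (S m); extend_env E C.
Qed.

End EnvironmentExtension.

Definition tr_inverted (M : term) : Prop :=
  forall G eo ek xo xk, env_o_ok G eo xo -> env_k_ok G ek xk ->
    (forall K, sorted G sK K = true ->
       sorted G sQ (tr eo ek M K) = true /\
       ccvj_eq (inv_Q G (tr eo ek M K)) (kfill (inv_K G K) (ren_o xo (ren_k xk M)))) /\
    (forall v, star eo ek M = Some v ->
       sorted G sW v = true /\ ccv_eq (inv_W G v) (ren_o xo (ren_k xk M))).

Definition trj_inverted (J : jump) : Prop :=
  forall G eo ek xo xk, env_o_ok G eo xo -> env_k_ok G ek xk ->
    sorted G sQ (trj eo ek J) = true /\
    ccvj_eq (inv_Q G (trj eo ek J)) (ren_oj xo (ren_kj xk J)).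

Lemma tr_inverted_value M :
  (forall G eo ek xo xk, env_o_ok G eo xo -> env_k_ok G ek xk ->
     exists v, star eo ek M = Some v /\
       sorted G sW v = true /\ ccv_eq (inv_W G v) (ren_o xo (ren_k xk M))) ->
  tr_inverted M.
Proof.
  intros H G eo ek xo xk HO HK; destruct (H G eo ek xo xk HO HK) as [v [Ev [Wv Iv]]].
  split; [intros K HKK | intros v' Ev'; rewrite Ev in Ev'; injection Ev' as <-; auto].
  rewrite (tr_value _ _ _ _ _ Ev); simpl; rewrite HKK, Wv.
  split; [reflexivity | apply kfill_cong, Iv].
Qed.

Lemma tr_inverted_Var n : tr_inverted (Var n).
Proof.
  apply tr_inverted_value; intros G eo ek xo xk HO HK.
  destruct (HO n) as [m [E [Gm C]]]; exists (tvar m); simpl; rewrite E, Gm, C.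
  repeat split; apply ccv_refl.
Qed.

Lemma tr_inverted_Lam B : tr_inverted B -> tr_inverted (Lam B).
Proof.
  intros IH; apply tr_inverted_value; intros G eo ek xo xk HO HK.
  eexists; split; [reflexivity|]; simpl.
  destruct (proj1 (IH _ _ _ _ _ (env_o_shift_k _ _ _ (env_o_cons _ _ _ HO))
                                (env_k_shift_k _ _ _ (env_k_shift_o _ _ _ HK))) (tvar 0) eq_refl)
    as [Q I].
  split; [assumption|].
  apply ccv_Lam; eapply ccv_trans; [apply ccv_Mu, I|]; simpl.
  replace (ren_o (uprn xo) (ren_k (fun n => S (xk n)) B))
    with (ren_k S (ren_o (uprn xo) (ren_k xk B)))
    by (rewrite <- (proj1 ren_o_ren_k), (proj1 ren_k_ren_k); reflexivity).
  apply ccv_mueta.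
Qed.

Lemma star_None eo ek M : star eo ek M = None -> is_value M = false.
Proof. destruct M; simpl; congruence. Qed.

Lemma star_Some eo ek M v : star eo ek M = Some v -> is_value M = true.
Proof. destruct M; simpl; congruence. Qed.

Section ApplicationCase.

Variables (M1 M2 : term) (G : nat -> bool) (eo ek : nat -> tm) (xo xk : nat -> nat) (K : tm).
Hypotheses (IH1 : tr_inverted M1) (IH2 : tr_inverted M2).
Hypotheses (HO : env_o_ok G eo xo) (HK : env_k_ok G ek xk) (HKK : sorted G sK K = true).

Let app_inverted (t : tm) : Prop :=
  sorted G sQ t = true /\
  ccvj_eq (inv_Q G t) (kfill (inv_K G K) (App (ren_o xo (ren_k xk M1)) (ren_o xo (ren_k xk M2)))).

Lemma shifted_value_inverted M v :
  tr_inverted M -> star eo ek M = Some v ->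
  sorted (scons true G) sW (tren S v) = true /\
  ccv_eq (inv_W (scons true G) (tren S v)) (ren_o S (ren_o xo (ren_k xk M))).
Proof.
  intros IH Ev.
  destruct (proj2 (IH _ _ _ _ _ (env_o_shift_o _ _ _ HO) (env_k_shift_o _ _ _ HK)) (tren S v))
    as [W I]; [rewrite star_sh, Ev; reflexivity|].
  rewrite (proj1 ren_o_ren_o); auto.
Qed.

Lemma app_inverted_vv v1 v2 : star eo ek M1 = Some v1 -> star eo ek M2 = Some v2 ->
  app_inverted (tapp (tapp v1 v2) K).
Proof.
  intros E1 E2.
  destruct (proj2 (IH1 _ _ _ _ _ HO HK) v1 E1) as [W1 I1].
  destruct (proj2 (IH2 _ _ _ _ _ HO HK) v2 E2) as [W2 I2].
  unfold app_inverted; simpl; rewrite (sorted_K_not_W _ _ HKK), W1, W2, HKK.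
  split; [reflexivity | apply kfill_cong, ccv_App; assumption].
Qed.

Lemma app_inverted_nv v2 : star eo ek M1 = None -> star eo ek M2 = Some v2 ->
  app_inverted (tr eo ek M1 (tlam (tapp (tapp (tvar 0) (tren S v2)) (tren S K)))).
Proof.
  intros E1 E2; destruct (shifted_value_inverted M2 v2 IH2 E2) as [W2 I2].
  destruct (proj1 (IH1 _ _ _ _ _ HO HK) (tlam (tapp (tapp (tvar 0) (tren S v2)) (tren S K))))
    as [Q1 I1]; [simpl; rewrite W2, sorted_shift, HKK, ?orb_true_r; reflexivity|].
  split; [assumption|].
  eapply ccvj_trans; [apply I1|]; simpl.
  rewrite sorted_shift, (sorted_K_not_W _ _ HKK), inv_K_shift_o by assumption.
  eapply ccvj_trans; [|apply ccvj_sym, kfill_app_let_l;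
    rewrite is_value_ren_o, is_value_ren_k; apply (star_None _ _ _ E1)].
  apply ccvj_JWhere; [apply kfill_cong, ccv_App; [apply ccv_refl | assumption] | apply ccv_refl].
Qed.

Lemma app_inverted_vn v1 : star eo ek M1 = Some v1 -> star eo ek M2 = None ->
  app_inverted (tr eo ek M2 (tlam (tapp (tapp (tren S v1) (tvar 0)) (tren S K)))).
Proof.
  intros E1 E2; destruct (shifted_value_inverted M1 v1 IH1 E1) as [W1 I1].
  destruct (proj1 (IH2 _ _ _ _ _ HO HK) (tlam (tapp (tapp (tren S v1) (tvar 0)) (tren S K))))
    as [Q2 I2]; [simpl; rewrite W1, sorted_shift, HKK, ?orb_true_r; reflexivity|].
  split; [assumption|].
  eapply ccvj_trans; [apply I2|]; simpl.
  rewrite sorted_shift, (sorted_K_not_W _ _ HKK), inv_K_shift_o by assumption.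
  eapply ccvj_trans; [|apply ccvj_sym, kfill_app_let_r; rewrite is_value_ren_o, is_value_ren_k;
    [apply (star_Some _ _ _ _ E1) | apply (star_None _ _ _ E2)]].
  apply ccvj_JWhere; [apply kfill_cong, ccv_App; [assumption | apply ccv_refl] | apply ccv_refl].
Qed.

Lemma app_inverted_nn : star eo ek M1 = None -> star eo ek M2 = None ->
  app_inverted (tr eo ek M1 (tlam (tr (sh eo) (sh ek) M2
                 (tlam (tapp (tapp (tvar 1) (tvar 0)) (tren S (tren S K))))))).
Proof.
  intros E1 E2.
  destruct (proj1 (IH2 _ _ _ _ _ (env_o_shift_o _ _ _ HO) (env_k_shift_o _ _ _ HK))
              (tlam (tapp (tapp (tvar 1) (tvar 0)) (tren S (tren S K))))) as [Q2 I2];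
    [simpl; rewrite !sorted_shift, HKK, ?orb_true_r; reflexivity|].
  destruct (proj1 (IH1 _ _ _ _ _ HO HK) (tlam (tr (sh eo) (sh ek) M2
              (tlam (tapp (tapp (tvar 1) (tvar 0)) (tren S (tren S K))))))) as [Q1 I1];
    [assumption|].
  split; [assumption|].
  eapply ccvj_trans; [apply I1|]; simpl.
  eapply ccvj_trans; [apply ccvj_JWhere; [apply I2 | apply ccv_refl]|]; simpl.
  rewrite !sorted_shift, (sorted_K_not_W _ _ HKK), !inv_K_shift_o
    by (rewrite ?sorted_shift; assumption).
  eapply ccvj_trans; [|apply ccvj_sym, kfill_app_let_lr; rewrite is_value_ren_o, is_value_ren_k;
    eapply star_None; eassumption].
  rewrite (proj1 ren_o_ren_o); apply ccvj_refl.
Qed.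

End ApplicationCase.

Lemma tr_inverted_App M1 M2 : tr_inverted M1 -> tr_inverted M2 -> tr_inverted (App M1 M2).
Proof.
  intros IH1 IH2 G eo ek xo xk HO HK; split; [intros K HKK | discriminate].
  simpl; destruct (star eo ek M1) as [v1|] eqn:E1, (star eo ek M2) as [v2|] eqn:E2.
  - eapply app_inverted_vv; eassumption.
  - eapply app_inverted_vn; eassumption.
  - eapply app_inverted_nv; eassumption.
  - eapply app_inverted_nn; eassumption.
Qed.

Lemma tr_inverted_Where L N : tr_inverted L -> tr_inverted N -> tr_inverted (Where L N).
Proof.
  intros IHL IHN G eo ek xo xk HO HK; split; [intros K HKK | discriminate]; simpl.
  destruct (proj1 (IHL _ _ _ _ _ (env_o_cons _ _ _ HO) (env_k_shift_o _ _ _ HK)) (tren S K))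
    as [QL IL]; [rewrite sorted_shift; assumption|].
  destruct (proj1 (IHN _ _ _ _ _ HO HK) (tlam (tr (scons (tvar 0) (sh eo)) (sh ek) L (tren S K))))
    as [QN IN]; [assumption|].
  split; [assumption|].
  eapply ccvj_trans; [apply IN|]; simpl.
  eapply ccvj_trans; [apply ccvj_JWhere; [apply IL | apply ccv_refl]|].
  rewrite inv_K_shift_o by assumption; apply ccvj_sym, kfill_where.
Qed.

Lemma tr_inverted_Mu J : trj_inverted J -> tr_inverted (Mu J).
Proof.
  intros IH G eo ek xo xk HO HK; split; [intros K HKK | discriminate]; simpl.
  destruct (IH _ _ _ _ _ (env_o_shift_k _ _ _ HO) (env_k_cons _ _ _ HK)) as [Q I].
  rewrite (sorted_K_not_W _ _ HKK), Q, HKK, orb_true_r.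
  split; [reflexivity | apply kfill_cong, ccv_Mu, I].
Qed.

Lemma trj_inverted_Jmp k N : tr_inverted N -> trj_inverted (Jmp k N).
Proof.
  intros IH G eo ek xo xk HO HK; simpl.
  destruct (HK k) as [m [E [Gm C]]]; rewrite E.
  destruct (proj1 (IH _ _ _ _ _ HO HK) (tvar m)) as [Q I]; [simpl; rewrite Gm; reflexivity|].
  split; [assumption|]; simpl in I; rewrite C in I; assumption.
Qed.

Lemma trj_inverted_JWhere J N : trj_inverted J -> tr_inverted N -> trj_inverted (JWhere J N).
Proof.
  intros IHJ IHN G eo ek xo xk HO HK; simpl.
  destruct (IHJ _ _ _ _ _ (env_o_cons _ _ _ HO) (env_k_shift_o _ _ _ HK)) as [QJ IJ].
  destruct (proj1 (IHN _ _ _ _ _ HO HK) (tlam (trj (scons (tvar 0) (sh eo)) (sh ek) J)))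
    as [QN IN]; [assumption|].
  split; [assumption|].
  eapply ccvj_trans; [apply IN | apply ccvj_JWhere; [assumption | apply ccv_refl]].
Qed.

Lemma tr_inverted_all : (forall M, tr_inverted M) /\ (forall J, trj_inverted J).
Proof.
  apply term_jump_mind; auto using tr_inverted_Var, tr_inverted_Lam, tr_inverted_App,
    tr_inverted_Where, tr_inverted_Mu, trj_inverted_Jmp, trj_inverted_JWhere.
Qed.

Lemma count_o_even n : count_o Nat.even (2 * n) = n.
Proof.
  induction n as [|n IH]; [reflexivity|].
  replace (2 * S n) with (S (S (2 * n))) by lia; cbn [count_o].
  change (fun i => Nat.even (S (S i))) with Nat.even; rewrite IH; reflexivity.
Qed.

Lemma count_k_even n : count_k Nat.even (2 * n + 1) = n.
Proof.
  induction n as [|n IH]; [reflexivity|].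
  replace (2 * S n + 1) with (S (S (2 * n + 1))) by lia; cbn [count_k].
  change (fun i => Nat.even (S (S i))) with Nat.even; rewrite IH; reflexivity.
Qed.

Lemma cps_inverted M :
  sorted Nat.even sT (cps M) = true /\ ccv_eq (inv_T Nat.even (cps M)) M.
Proof.
  assert (HO : env_o_ok (scons false Nat.even) (sh (fun n => tvar (2 * n))) (fun n => n)).
  { intros n; exists (S (2 * n)); split; [reflexivity|].
    split; [apply Nat.even_even | apply count_o_even]. }
  assert (HK : env_k_ok (scons false Nat.even) (sh (fun n => tvar (2 * n + 1))) S).
  { intros n; exists (S (2 * n + 1)); split; [reflexivity|].
    split; [apply Nat.even_odd | apply (f_equal S), count_k_even]. }
  destruct (proj1 (proj1 tr_inverted_all M _ _ _ _ _ HO HK) (tvar 0) eq_refl) as [Q I].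
  split; [exact Q|]; simpl.
  eapply ccv_trans; [apply ccv_Mu, I|]; simpl.
  rewrite (proj1 ren_o_id); apply ccv_mueta.
Qed.

Theorem corollary1p32 (M1 M2 : term) :
  beta_eta (cps M1) (cps M2) -> ccv_eq M1 M2.
Proof.
  intros H; destruct (beta_eta_join _ _ H) as [w [H1 H2]].
  destruct (cps_inverted M1) as [S1 I1], (cps_inverted M2) as [S2 I2].
  destruct (be_rt1n_inv_T _ _ _ H1 S1) as [_ R1], (be_rt1n_inv_T _ _ _ H2 S2) as [_ R2].
  apply (ccv_trans _ (inv_T Nat.even (cps M1))); [apply ccv_sym, I1|].
  apply (ccv_trans _ (inv_T Nat.even w)); [exact R1|].
  apply (ccv_trans _ (inv_T Nat.even (cps M2))); [apply ccv_sym, R2 | exact I2].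
Qed.
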